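(* For all types $\tau_1,\tau_2,\tau_p$ with $\tau_p=\tau_1+\tau_2$, every heap $H$, register file $R$ and value $v$: $\mathrm{SATv}(H,R,v,\tau_p)$ holds if and only if both $\mathrm{SATv}(H,R,v,\tau_1)$ and $\mathrm{SATv}(H,R,v,\tau_2)$ hold.
   Context: Refinement formulas are first-order formulas over integer program variables, integer literals, a value variable $\nu$, atomic predicates of a fixed theory and context-prefix predicates; $\models\psi$ means $\psi$ is valid. Types $\tau ::= \{\nu:\mathtt{int}\mid\varphi\}\mid\tau\ \mathtt{ref}^r$, $r\in[0,1]$ rational. Type addition is the least commutative partial operation with $\{\nu:\mathtt{int}\mid\varphi_1\}+\{\nu:\mathtt{int}\mid\varphi_2\}=\{\nu:\mathtt{int}\mid\varphi_1\wedge\varphi_2\}$ and $\tau_1\ \mathtt{ref}^{r_1}+\tau_2\ \mathtt{ref}^{r_2}=(\tau_1+\tau_2)\ \mathtt{ref}^{r_1+r_2}$. Values: integers or addresses; heap $H$: finite partial map addresses $\to$ values; register file $R$: finite partial map variables $\to$ values. $[R]\varphi$: $[\emptyset]\varphi=\varphi$, $[R\{x\mapsto n\}]\varphi=[R][n/x]\varphi$ ($n$ integer), $[R\{x\mapsto a\}]\varphi=[R]\varphi$ ($a$ address). $\mathrm{SATv}(H,R,v,\tau)$: for $\tau=\{\nu:\mathtt{int}\mid\varphi\}$, $v\in\mathbb Z$ and $\models[R][v/\nu]\varphi$; for $\tau=\tau'\ \mathtt{ref}^r$, $v$ is an address $a\in dom(H)$ and $\mathrm{SATv}(H,R,H(a),\tau')$.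 *)

From HB Require Import structures.
From mathcomp Require Import all_boot all_order all_algebra.
From mathcomp Require Import finmap.
Set Implicit Arguments. Unset Strict Implicit. Unset Printing Implicit Defensive.
Import Order.TTheory GRing.Theory Num.Theory.

Local Open Scope fmap_scope.

Definition var := nat.
Definition addr := nat.

Inductive term : Type :=
| TVar of var
| TLit of int
| TNu.

(* First-order refinement formulas.  [A] is the signature of atomic
   predicates of the fixed theory; [C] the (symbols of) context-prefix
   predicates. *)
Inductive formula (A C : Type) : Type :=
| FTrue
| FFalse
| FAtom of A & seq term
| FCtx of C
| FNot of formula A C
| FAnd of formula A C & formula A C
| FOr of formula A C & formula A C
| FImp of formula A C & formula A C
| FAll of var & formula A C
| FEx of var & formula A C.

Arguments FTrue {A C}.
Arguments FFalse {A C}.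
Arguments FAtom {A C}.
Arguments FCtx {A C}.
Arguments FNot {A C}.
Arguments FAnd {A C}.
Arguments FOr {A C}.
Arguments FImp {A C}.
Arguments FAll {A C}.
Arguments FEx {A C}.

Section Formulas.
Variables (A C : Type).

Definition subst_term (x : var) (n : int) (t : term) : term :=
  match t with
  | TVar y => if y == x then TLit n else t
  | _ => t
  end.

(* [n/x] phi : replace free occurrences of x by the literal n
   (no capture possible since n is closed). *)
Fixpoint subst (x : var) (n : int) (phi : formula A C) : formula A C :=
  match phi with
  | FTrue => FTrue
  | FFalse => FFalse
  | FAtom p ts => FAtom p (map (subst_term x n) ts)
  | FCtx c => FCtx c
  | FNot p => FNot (subst x n p)
  | FAnd p q => FAnd (subst x n p) (subst x n q)
  | FOr p q => FOr (subst x n p) (subst x n q)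
  | FImp p q => FImp (subst x n p) (subst x n q)
  | FAll y p => if y == x then FAll y p else FAll y (subst x n p)
  | FEx y p => if y == x then FEx y p else FEx y (subst x n p)
  end.

Definition subst_nu_term (n : int) (t : term) : term :=
  match t with
  | TNu => TLit n
  | _ => t
  end.

Fixpoint subst_nu (n : int) (phi : formula A C) : formula A C :=
  match phi with
  | FTrue => FTrue
  | FFalse => FFalse
  | FAtom p ts => FAtom p (map (subst_nu_term n) ts)
  | FCtx c => FCtx c
  | FNot p => FNot (subst_nu n p)
  | FAnd p q => FAnd (subst_nu n p) (subst_nu n q)
  | FOr p q => FOr (subst_nu n p) (subst_nu n q)
  | FImp p q => FImp (subst_nu n p) (subst_nu n q)
  | FAll y p => FAll y (subst_nu n p)
  | FEx y p => FEx y (subst_nu n p)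
  end.

Variables (I : A -> seq int -> Prop) (J : C -> Prop).

Definition eval_term (rho : var -> int) (nu : int) (t : term) : int :=
  match t with
  | TVar x => rho x
  | TLit n => n
  | TNu => nu
  end.

Definition upd (rho : var -> int) (x : var) (n : int) : var -> int :=
  fun y => if y == x then n else rho y.

Fixpoint eval (rho : var -> int) (nu : int) (phi : formula A C) : Prop :=
  match phi with
  | FTrue => True
  | FFalse => False
  | FAtom p ts => I p (map (eval_term rho nu) ts)
  | FCtx c => J c
  | FNot p => ~ eval rho nu p
  | FAnd p q => eval rho nu p /\ eval rho nu q
  | FOr p q => eval rho nu p \/ eval rho nu q
  | FImp p q => eval rho nu p -> eval rho nu q
  | FAll x p => forall n : int, eval (upd rho x n) nu p
  | FEx x p => exists n : int, eval (upd rho x n) nu p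
  end.

Definition valid (psi : formula A C) : Prop :=
  forall (rho : var -> int) (nu : int), eval rho nu psi.

End Formulas.

(* Refinement types: {nu:int | phi} and tau ref^r. *)
Inductive ty (A C : Type) : Type :=
| TyInt of formula A C
| TyRef of ty A C & rat.
Arguments TyInt {A C}.
Arguments TyRef {A C}.

Fixpoint wf_ty A C (t : ty A C) : Prop :=
  match t with
  | TyInt _ => True
  | TyRef t' r => (0 <= r <= 1)%R /\ wf_ty t'
  end.

(* Type addition, as the least commutative (partial) relation closed under
   the two defining equations: tplus t1 t2 tp  means  tp = t1 + t2. *)
Inductive tplus (A C : Type) : ty A C -> ty A C -> ty A C -> Prop :=
| tplus_int : forall phi1 phi2,
    tplus (TyInt phi1) (TyInt phi2) (TyInt (FAnd phi1 phi2))
| tplus_ref : forall t1 t2 t r1 r2,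
    tplus t1 t2 t -> tplus (TyRef t1 r1) (TyRef t2 r2) (TyRef t (r1 + r2)%R)
| tplus_comm : forall t1 t2 t, tplus t1 t2 t -> tplus t2 t1 t.

Inductive value : Type :=
| VInt of int
| VAddr of addr.

Definition value_to_sum (v : value) : int + addr :=
  match v with VInt n => inl n | VAddr a => inr a end.
Definition sum_to_value (s : int + addr) : value :=
  match s with inl n => VInt n | inr a => VAddr a end.
Lemma value_sumK : cancel value_to_sum sum_to_value. Proof. by case. Qed.
HB.instance Definition _ := Countable.copy value (can_type value_sumK).

Definition heap := {fmap addr -> value}.
Definition regfile := {fmap var -> value}.

(* The substitutions are
   of closed literals for distinct variables, so their order is immaterial;
   we use the enumeration order of the domain. *)
Definition subst_regs A C (R : regfile) (phi : formula A C) : formula A C :=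
  foldr (fun x psi => match R.[? x] with
                      | Some (VInt n) => subst x n psi
                      | _ => psi
                      end) phi (enum_fset (domf R)).

Fixpoint SATv A C (I : A -> seq int -> Prop) (J : C -> Prop)
    (H : heap) (R : regfile) (v : value) (t : ty A C) : Prop :=
  match t with
  | TyInt phi =>
      match v with
      | VInt n => valid I J (subst_regs R (subst_nu n phi))
      | VAddr _ => False
      end
  | TyRef t' _ =>
      match v with
      | VAddr a => match H.[? a] with
                   | Some w => SATv I J H R w t'
                   | None => False
                   end
      | VInt _ => False
      end
  end.

From mathcomp Require Import all_boot all_order all_algebra finmap.

(* Induction on the derivation of [tp = t1 + t2]: at integer types the sum is
   a conjunction of refinements, and both register substitution and validity
   distribute over conjunction; at reference types both sides read the same
   heap cell; the commutativity rule is symmetric in [t1] and [t2].  The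
   ownership fractions never matter. *)

Section TypeAddition.

Variables (A C : Type) (I : A -> seq int -> Prop) (J : C -> Prop).

Lemma subst_regs_and (R : regfile) (p q : formula A C) :
  subst_regs R (FAnd p q) = FAnd (subst_regs R p) (subst_regs R q).
Proof.
rewrite /subst_regs; elim: (enum_fset (domf R)) => [|x s IH] //=.
by rewrite IH; case: (R.[? x]%fmap) => [[n|a]|].
Qed.

Lemma valid_and (p q : formula A C) :
  valid I J (FAnd p q) <-> valid I J p /\ valid I J q.
Proof.
split=> [pq | [vp vq] rho nu]; last by split.
by split=> rho nu; case: (pq rho nu).
Qed.

Lemma SATv_tplus (t1 t2 tp : ty A C) (H : heap) (R : regfile) (v : value) :
  tplus t1 t2 tp ->
  (SATv I J H R v tp <-> SATv I J H R v t1 /\ SATv I J H R v t2).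
Proof.
move=> sum12; elim: sum12 v => {t1 t2 tp}.
- move=> p1 p2 [n|a] /=; last by tauto.
  by rewrite subst_regs_and; apply: valid_and.
- move=> t1 t2 t r1 r2 _ IH [n|a] /=; first by tauto.
  by case: (H.[? a]%fmap) => [w|]; [apply: IH | tauto].
- by move=> t1 t2 t _ IH v; rewrite IH; tauto.
Qed.

End TypeAddition.

Theorem lemma16 (A C : Type) (I : A -> seq int -> Prop) (J : C -> Prop)
    (t1 t2 tp : ty A C) (H : heap) (R : regfile) (v : value) :
  wf_ty t1 -> wf_ty t2 -> wf_ty tp -> tplus t1 t2 tp ->
  (SATv I J H R v tp <-> SATv I J H R v t1 /\ SATv I J H R v t2).
Proof. by move=> _ _ _; apply: SATv_tplus. Qed.
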